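(* There exist constants $C>0$ and $n_0$ such that for every $n\ge n_0$ and every assignment $x:V\to\{-1,1\}$ with $x_{-\mathbf v}=-x_{\mathbf v}$ for all $\mathbf v\in V$, the total weight of clauses of $\Phi_n$ satisfied by $x$ is at most $\frac{3(\sqrt{21}-4)}{2}+\frac{C}{n}$.
   Context: Let $\mathbf e_1,\dots,\mathbf e_n$ be the standard basis of $\mathbb R^n$ and $V=\{\frac{1}{\sqrt3}(b_1\mathbf e_i+b_2\mathbf e_j+b_3\mathbf e_k): b_1,b_2,b_3\in\{-1,1\},\ 1\le i<j<k\le n\}$. To each $\mathbf v\in V$ associate a Boolean variable $x_{\mathbf v}\in\{-1,1\}$, with the identification $x_{-\mathbf v}=-x_{\mathbf v}$. $\mathrm{NAE}(y_1,\dots,y_k)$ is satisfied iff not all $y_i$ are equal. $\mathcal C_3$ is the set of clauses $\mathrm{NAE}(x_{\mathbf v_1},x_{\mathbf v_2},x_{\mathbf v_3})$ with $\mathbf v_1=\frac{1}{\sqrt3}(s_1\mathbf e_{i_1}-s_2\mathbf e_{i_2}+s_4\mathbf e_{i_4})$, $\mathbf v_2=\frac{1}{\sqrt3}(s_2\mathbf e_{i_2}-s_3\mathbf e_{i_3}+s_5\mathbf e_{i_5})$, $\mathbf v_3=\frac{1}{\sqrt3}(s_3\mathbf e_{i_3}-s_1\mathbf e_{i_1}+s_6\mathbf e_{i_6})$ for distinct indices $i_1,\dots,i_6\in[n]$ and signs $s_1,\dots,s_6\in\{-1,1\}$. $\mathcal C_5$ is the set of clauses $\mathrm{NAE}(x_{\mathbf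 v_1},\dots,x_{\mathbf v_5})$ with $\mathbf v_j=\frac{1}{\sqrt3}(s_1\mathbf e_{i_1}+s_{2j}\mathbf e_{i_{2j}}+s_{2j+1}\mathbf e_{i_{2j+1}})$ for $j\in\{1,2,3,4\}$ and $\mathbf v_5=\frac{1}{\sqrt3}(s_{10}\mathbf e_{i_{10}}+s_{11}\mathbf e_{i_{11}}+s_{12}\mathbf e_{i_{12}})$ for distinct indices $i_1,\dots,i_{12}\in[n]$ and signs $s_1,\dots,s_{12}\in\{-1,1\}$. $\Phi_n$ is the MAX NAE-SAT instance on variables $\{x_{\mathbf v}\}$ with clause set $\mathcal C_3\cup\mathcal C_5$, where each clause of $\mathcal C_3$ has weight $\frac{1-3/\sqrt{21}}{|\mathcal C_3|}$ and each clause of $\mathcal C_5$ has weight $\frac{3}{\sqrt{21}\,|\mathcal C_5|}$ (total weight $1$). *)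

From HB Require Import structures.
From mathcomp Require Import all_boot all_order all_algebra.
From mathcomp Require Import reals.
Set Implicit Arguments. Unset Strict Implicit. Unset Printing Implicit Defensive.
Import Order.TTheory GRing.Theory Num.Theory.
Local Open Scope ring_scope.

(* A vector (1/sqrt 3)(b1 e_i + b2 e_j + b3 e_k) of V is encoded by its
   integer coefficient vector b1 e_i + b2 e_j + b3 e_k (the common factor
   1/sqrt 3 is dropped; this encoding is injective). *)
Definition vec (n : nat) := {ffun 'I_n -> int}.

Definition inV (n : nat) (v : vec n) : bool :=
  (#|[set i | v i != 0]| == 3)%N && [forall i, (v i == 0) || (v i == 1) || (v i == -1)].

Definition negv (n : nat) (v : vec n) : vec n := [ffun t => - v t].

Definition mkv3 (n : nat) (i j k : 'I_n) (a b c : int) : vec n :=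
  [ffun t => (if t == i then a else 0) + (if t == j then b else 0)
            + (if t == k then c else 0)].

Definition sg (b : bool) : int := if b then 1 else -1.

(* an assignment: x v = true means x_v = 1, false means x_v = -1 *)
Definition assignment (n : nat) := vec n -> bool.

Definition nae (s : seq bool) : bool := ~~ constant s.


Definition params (n k : nat) := ({ffun 'I_k -> 'I_n} * {ffun 'I_k -> bool})%type.

Definition C3 (n : nat) : {set params n 6} := [set p : params n 6 | injectiveb p.1].
Definition C5 (n : nat) : {set params n 12} := [set p : params n 12 | injectiveb p.1].

(* 0-based: index a (1-based) is stored at position a-1 *)
Definition clause3 (n : nat) (p : params n 6) : seq (vec n) :=
  let i (a : nat) := p.1 (inord a.-1) in
  let s (a : nat) := sg (p.2 (inord a.-1)) in
  [:: mkv3 (i 1) (i 2) (i 4) (s 1) (- s 2) (s 4);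
      mkv3 (i 2) (i 3) (i 5) (s 2) (- s 3) (s 5);
      mkv3 (i 3) (i 1) (i 6) (s 3) (- s 1) (s 6)].

Definition clause5 (n : nat) (p : params n 12) : seq (vec n) :=
  let i (a : nat) := p.1 (inord a.-1) in
  let s (a : nat) := sg (p.2 (inord a.-1)) in
  [seq mkv3 (i 1) (i (2 * j)) (i (2 * j + 1)) (s 1) (s (2 * j)) (s (2 * j + 1))
      | j <- [:: 1; 2; 3; 4]%N] ++
  [:: mkv3 (i 10) (i 11) (i 12) (s 10) (s 11) (s 12)].

Definition satisfied (n : nat) (x : assignment n) (c : seq (vec n)) : bool :=
  nae [seq x v | v <- c].

Definition w3 {R : realType} : R := 1 - 3 / Num.sqrt 21.
Definition w5 {R : realType} : R := 3 / Num.sqrt 21.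

Definition satWeight (R : realType) (n : nat) (x : assignment n) : R :=
  \sum_(p in C3 n | satisfied x (clause3 p)) (w3 / #|C3 n|%:R)
  + \sum_(p in C5 n | satisfied x (clause5 p)) (w5 / #|C5 n|%:R).

From HB Require Import structures.
From mathcomp Require Import all_boot all_order all_algebra.
From mathcomp Require Import reals.
From mathcomp Require Import ring lra zify.
Import Order.TTheory GRing.Theory Num.Theory.
Local Open Scope ring_scope.

Set Implicit Arguments. Unset Strict Implicit. Unset Printing Implicit Defensive.

(* Write s(v) = +-1 for the value of x_v.  Let a be the average of s(v) s(w) over pairs of
   vectors of V meeting in exactly one coordinate, with the same sign there, and A the average
   of s(v1) s(v2) s(v3) s(v4) over four such vectors through a common coordinate.  In a
   3-clause, consecutive vectors share a coordinate with opposite signs, so by oddness of x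
   their literals have average product -a and a random 3-clause is satisfied with probability
   3 (1 + a) / 4.  Flipping the last vector of a 5-clause negates its literal, so a 5-clause is
   violated with half the probability that its first four literals agree; expanding that
   event in spins, a random 5-clause is satisfied with probability (15 - 6 a - A) / 16.
   Grouping the quadruples by their common coordinate, Cauchy-Schwarz gives
   A >= a^2 - O(1/n), the error coming from quadruples that are not disjoint.  Finally
   w3 3 (1 + a) / 4 + w5 (15 - 6 a - a^2) / 16 is maximal at a = 2 sqrt 21 - 9, where it
   equals 3 (sqrt 21 - 4) / 2. *)

Section FfunCat.
Variable T : Type.

Definition ffun_cat m l (q : {ffun 'I_m -> T}) (r : {ffun 'I_l -> T}) :
  {ffun 'I_(m + l) -> T} :=
  [ffun i => match split i with inl j => q j | inr j => r j end].
Definition ffun_lsub m l (f : {ffun 'I_(m + l) -> T}) : {ffun 'I_m -> T} :=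
  [ffun j => f (lshift l j)].
Definition ffun_rsub m l (f : {ffun 'I_(m + l) -> T}) : {ffun 'I_l -> T} :=
  [ffun j => f (rshift m j)].

Lemma ffun_cat_lshift m l (q : {ffun 'I_m -> T}) (r : {ffun 'I_l -> T}) j :
  ffun_cat q r (lshift l j) = q j.
Proof. by rewrite ffunE (unsplitK (inl _ j)). Qed.

Lemma ffun_cat_rshift m l (q : {ffun 'I_m -> T}) (r : {ffun 'I_l -> T}) j :
  ffun_cat q r (rshift m j) = r j.
Proof. by rewrite ffunE (unsplitK (inr _ j)). Qed.

Lemma ffun_catKl m l (q : {ffun 'I_m -> T}) (r : {ffun 'I_l -> T}) :
  ffun_lsub (ffun_cat q r) = q.
Proof. by apply/ffunP => j; rewrite ffunE ffun_cat_lshift. Qed.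

Lemma ffun_catKr m l (q : {ffun 'I_m -> T}) (r : {ffun 'I_l -> T}) :
  ffun_rsub (ffun_cat q r) = r.
Proof. by apply/ffunP => j; rewrite ffunE ffun_cat_rshift. Qed.

Lemma ffun_subK m l (f : {ffun 'I_(m + l) -> T}) :
  ffun_cat (ffun_lsub f) (ffun_rsub f) = f.
Proof. by apply/ffunP => i; rewrite !ffunE; case: split_ordP => j ->; rewrite ffunE. Qed.

Lemma ffun_cat_inord m l (q : {ffun 'I_m.+1 -> T}) (r : {ffun 'I_l.+1 -> T}) a :
  (a <= m.+1 + l)%N ->
  ffun_cat q r (inord a) = if (a <= m)%N then q (inord a) else r (inord (a - m.+1)).
Proof.
move=> al; have a_lt : (a < (m + l.+1).+1)%N by lia.
case: leqP => am.
  have -> : inord a = lshift l.+1 (inord a : 'I_m.+1) :> 'I_(m.+1 + l.+1).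
    by apply: val_inj; rewrite /= !inordK //; lia.
  exact: ffun_cat_lshift.
have -> : inord a = rshift m.+1 (inord (a - m.+1) : 'I_l.+1) :> 'I_(m.+1 + l.+1).
  have ma_lt : (a - m.+1 < l.+1)%N by lia.
  by apply: val_inj; rewrite /= !inordK //; lia.
exact: ffun_cat_rshift.
Qed.

Lemma ffun_lsub_inord m l (f : {ffun 'I_(m.+1 + l) -> T}) a :
  (a <= m)%N -> ffun_lsub f (inord a) = f (inord a).
Proof.
move=> am; rewrite ffunE; congr (f _); apply: val_inj.
by rewrite /= !inordK // ltnS (leq_trans am) // leq_addr.
Qed.

End FfunCat.

Lemma injectiveb_ffun_cat (U : eqType) m l
    (q : {ffun 'I_m -> U}) (r : {ffun 'I_l -> U}) :
  injectiveb (ffun_cat q r) =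
  [&& injectiveb q, injectiveb r & [forall i, forall j, q i != r j]].
Proof.
apply/idP/idP.
- move/injectiveP => h; apply/and3P; split.
  + apply/injectiveP => i j e; apply: (@lshift_inj m l); apply: h.
    by rewrite !ffun_cat_lshift.
  + apply/injectiveP => i j e; apply: (@rshift_inj m l); apply: h.
    by rewrite !ffun_cat_rshift.
  + apply/forallP => i; apply/forallP => j; apply/negP => /eqP e.
    have := h (lshift l i) (rshift m j).
    by rewrite ffun_cat_lshift ffun_cat_rshift => /(_ e) /eqP; rewrite eq_lrshift.
- case/and3P => /injectiveP hq /injectiveP hr /forallP hd; apply/injectiveP => i j.
  case: (split_ordP i) => i' ->; case: (split_ordP j) => j' ->;
    rewrite ?ffun_cat_lshift ?ffun_cat_rshift.
  + by move/hq ->.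
  + by move=> e; have /forallP /(_ j') := hd i'; rewrite e eqxx.
  + by move=> e; have /forallP /(_ i') := hd j'; rewrite e eqxx.
  + by move/hr ->.
Qed.

Lemma forall_ord_add m l (P : pred 'I_(m + l)) :
  [forall i, P i] = [forall i, P (lshift l i)] && [forall j, P (rshift m j)].
Proof.
apply/forallP/andP => [h | [/forallP hl /forallP hr] i]; first by split; apply/forallP.
by case: (split_ordP i) => j ->.
Qed.

Lemma card_injective_ffun_cat n m l (q : {ffun 'I_m -> 'I_n}) : injectiveb q ->
  #|[pred r : {ffun 'I_l -> 'I_n} | injectiveb (ffun_cat q r)]| = ((n - m) ^_ l)%N.
Proof.
move=> iq.
have card_free : #|[pred t : 'I_n | t \notin codom q]| = (n - m)%N.
  rewrite -[in RHS](card_ord n) -(cardC (mem (codom q))) card_codom ?card_ord.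
    by rewrite addKn; apply: eq_card => t; rewrite !inE.
  exact/injectiveP.
rewrite -card_free -[X in (_ ^_ X)%N](card_ord l) -card_inj_ffuns_on.
apply: eq_card => r; rewrite !inE injectiveb_ffun_cat iq /= andbC.
congr (_ && _); apply/forallP/ffun_onP => [h j | h i].
- by rewrite inE; apply/codomP => -[i e]; have /forallP /(_ j) := h i; rewrite e eqxx.
- by apply/forallP => j; apply/eqP => e; have := h j; rewrite inE -e codom_f.
Qed.

Definition params_cat n m l (q : params n m) (r : params n l) : params n (m + l) :=
  (ffun_cat q.1 r.1, ffun_cat q.2 r.2).
Definition params_lsub n m l (p : params n (m + l)) : params n m :=
  (ffun_lsub p.1, ffun_lsub p.2).

Lemma params_catKl n m l (q : params n m) (r : params n l) :
  params_lsub (params_cat q r) = q.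
Proof. by rewrite /params_lsub /= !ffun_catKl; case: q. Qed.

Lemma sum_params_cat (R : nmodType) n m l (F : params n (m + l) -> R) :
  \sum_(p : params n (m + l)) F p =
  \sum_(q : params n m) \sum_(r : params n l) F (params_cat q r).
Proof.
rewrite pair_bigA /= (reindex (fun qr => params_cat qr.1 qr.2)) //=.
exists (fun p => (params_lsub p, (ffun_rsub p.1, ffun_rsub p.2))) => [[q r] _ | p _] /=.
  by rewrite params_catKl /= !ffun_catKr; case: r.
by rewrite /params_cat /= !ffun_subK; case: p.
Qed.

Lemma card_params n k : #|{: params n k}| = (n ^ k * 2 ^ k)%N.
Proof. by rewrite card_prod !card_ffun !card_ord card_bool. Qed.

Lemma card_params_index n k (P : pred {ffun 'I_k -> 'I_n}) :
  #|[pred p : params n k | P p.1]| = (#|P| * 2 ^ k)%N.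
Proof.
rewrite (eq_card (B := setX [set f | P f] [set: {ffun 'I_k -> bool}])); last first.
  by case=> f s; rewrite !inE andbT.
rewrite cardsX cardsT card_ffun card_bool card_ord; congr (_ * _)%N.
by apply: eq_card => f; rewrite inE.
Qed.

Lemma card_injective_params n k :
  #|[pred p : params n k | injectiveb p.1]| = (n ^_ k * 2 ^ k)%N.
Proof.
rewrite (card_params_index (fun f => injectiveb f)); congr (_ * _)%N.
by have := card_inj_ffuns 'I_k 'I_n; rewrite !card_ord => <-; apply: eq_card => f; rewrite inE.
Qed.

Lemma sum_injective_params_lsub (R : pzRingType) n m l (G : params n m -> R) :
  \sum_(p : params n (m + l) | injectiveb p.1) G (params_lsub p) =
  ((n - m) ^_ l * 2 ^ l)%:R * \sum_(q : params n m | injectiveb q.1) G q.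
Proof.
rewrite big_mkcond sum_params_cat mulr_sumr [in RHS]big_mkcond; apply: eq_bigr => q _ /=.
under eq_bigr do rewrite params_catKl.
case iq: (injectiveb q.1); last first.
  by apply: big1 => r _; rewrite /= injectiveb_ffun_cat iq.
rewrite -big_mkcond sumr_const mulr_natl; congr (_ *+ _).
by rewrite (card_params_index (fun r => injectiveb (ffun_cat q.1 r))) card_injective_ffun_cat.
Qed.

(** * Relabelling positions and flipping signs *)
Definition relabel n k (f : 'I_k -> 'I_k) (flip : 'I_k -> bool) (p : params n k) :
  params n k := ([ffun i => p.1 (f i)], [ffun i => p.2 (f i) (+) flip i]).

Lemma relabel_inj n k (f : 'I_k -> 'I_k) flip :
  injective f -> injective (@relabel n k f flip).
Proof.
move=> /injF_bij[g _ gf] [p1 p2] [q1 q2] e.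
have e1 : p1 = q1.
  apply/ffunP => j; have := congr1 (fun p : params n k => p.1 (g j)) e.
  by rewrite /= !ffunE gf.
have e2 : p2 = q2.
  apply/ffunP => j; have := congr1 (fun p : params n k => p.2 (g j)) e.
  by rewrite /= !ffunE gf => /addIb.
by rewrite e1 e2.
Qed.

Lemma sum_injective_params_relabel (R : nmodType) n k (f : 'I_k -> 'I_k) flip
    (F : params n k -> R) :
  injective f ->
  \sum_(p : params n k | injectiveb p.1) F p =
  \sum_(p : params n k | injectiveb p.1) F (relabel f flip p).
Proof.
move=> fi; have [g _ gf] := injF_bij fi.
rewrite (reindex_inj (@relabel_inj n k f flip fi)); apply: eq_bigl => p /=.
apply/injectiveP/injectiveP => h i j.
- by move=> e; apply: (can_inj gf); apply: h; rewrite !ffunE !gf.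
- by rewrite !ffunE => /h /fi.
Qed.

(* Concrete relabelings are given by the list [s] of their values; injectivity
   is then checked by computation against a candidate inverse list [s']. *)
Definition ord_of_seq k (s : seq nat) (i : 'I_k.+1) : 'I_k.+1 := inord (nth 0%N s i).
Arguments ord_of_seq : clear implicits.

Lemma ord_of_seq_inj k s s' :
  all (fun a => (nth 0%N s a <= k)%N && (nth 0%N s' (nth 0%N s a) == a)) (iota 0 k.+1) ->
  injective (ord_of_seq k s).
Proof.
move/allP => h; apply: (can_inj (g := ord_of_seq k s')) => i; apply: val_inj.
have /andP[sik /eqP s's] : (nth 0%N s i <= k)%N && (nth 0%N s' (nth 0%N s i) == i).
  by apply: h; rewrite mem_iota add0n ltn_ord.
by rewrite /ord_of_seq /= (@inordK k (nth 0%N s i)) ?ltnS // s's inordK.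
Qed.

Definition relabel_seq n k (s : seq nat) (flips : seq bool) : params n k.+1 -> params n k.+1 :=
  relabel (ord_of_seq k s) (fun i => nth false flips i).

Lemma relabel_seq_index n k s flips (p : params n k.+1) a : (a <= k)%N ->
  (relabel_seq s flips p).1 (inord a) = p.1 (inord (nth 0%N s a)).
Proof. by move=> ak; rewrite ffunE /ord_of_seq inordK. Qed.

Lemma relabel_seq_sign n k s flips (p : params n k.+1) a : (a <= k)%N ->
  (relabel_seq s flips p).2 (inord a) = p.2 (inord (nth 0%N s a)) (+) nth false flips a.
Proof. by move=> ak; rewrite ffunE /ord_of_seq inordK. Qed.

Lemma sum_injective_params_relabel_seq (R : nmodType) n k (s s' : seq nat) flips
    (F : params n k.+1 -> R) :
  all (fun a => (nth 0%N s a <= k)%N && (nth 0%N s' (nth 0%N s a) == a)) (iota 0 k.+1) ->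
  \sum_(p : params n k.+1 | injectiveb p.1) F p =
  \sum_(p : params n k.+1 | injectiveb p.1) F (relabel_seq s flips p).
Proof. by move=> ss'; apply/sum_injective_params_relabel/(ord_of_seq_inj ss'). Qed.
Arguments sum_injective_params_relabel_seq {R n k} s s' flips {F}.

(** * Spins and literals *)
Definition spin (R : pzRingType) (b : bool) : R := if b then 1 else -1.
Arguments spin {R}.

Lemma spinN (R : pzRingType) b : spin (~~ b) = - spin b :> R.
Proof. by case: b; rewrite /spin ?opprK. Qed.

Lemma nae3_spin (R : numFieldType) b1 b2 b3 :
  (nae [:: b1; b2; b3])%:R =
  1 - (1 + spin b1 * spin b2 + spin b2 * spin b3 + spin b3 * spin b1) / 4 :> R.
Proof. by case: b1; case: b2; case: b3; rewrite /spin /=; field. Qed.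

Lemma constant4_spin (R : numFieldType) b1 b2 b3 b4 :
  (constant [:: b1; b2; b3; b4])%:R =
  (1 + spin b1 * spin b2 + spin b1 * spin b3 + spin b1 * spin b4 + spin b2 * spin b3
     + spin b2 * spin b4 + spin b3 * spin b4 + spin b1 * spin b2 * spin b3 * spin b4) / 8
  :> R.
Proof. by case: b1; case: b2; case: b3; case: b4; rewrite /spin /=; field. Qed.

Lemma constant_rcons_flip (s : seq bool) b : s != [::] ->
  (constant (rcons s b) + constant (rcons s (~~ b)) = constant s)%N.
Proof. by case: s => [|y t] // _; rewrite /= !all_rcons; case: all; case: b; case: y. Qed.

Lemma sgN b : sg (~~ b) = - sg b.
Proof. by case: b. Qed.

Lemma mkv3_opp n (i j k : 'I_n) a b c :
  mkv3 i j k (- a) (- b) (- c) = negv (mkv3 i j k a b c).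
Proof.
by apply/ffunP => t; rewrite !ffunE !opprD; congr (_ + _ + _); case: (t == _); rewrite ?oppr0.
Qed.

Lemma mkv3C n (i j k : 'I_n) a b c : mkv3 i j k a b c = mkv3 j i k b a c.
Proof. by apply/ffunP => t; rewrite !ffunE (addrC (if t == i then _ else _)). Qed.

Lemma inV_mkv3 n (i j k : 'I_n) a b c : i != j -> i != k -> j != k ->
  inV (mkv3 i j k (sg a) (sg b) (sg c)).
Proof.
move=> /negbTE ij /negbTE ik /negbTE jk.
have coord t : mkv3 i j k (sg a) (sg b) (sg c) t =
    if t == i then sg a else if t == j then sg b else if t == k then sg c else 0.
  rewrite ffunE; case: (eqVneq t i) => [->|_]; first by rewrite ij ik !addr0.
  by case: (eqVneq t j) => [->|_]; rewrite ?jk ?addr0 ?add0r.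
have sg_neq0 e : sg e != 0 by case: e.
apply/andP; split.
- have -> : [set t | mkv3 i j k (sg a) (sg b) (sg c) t != 0] = i |: (j |: [set k]).
    apply/setP => t; rewrite !inE coord.
    by case: (t == i); case: (t == j); case: (t == k); rewrite ?sg_neq0 ?eqxx.
  by rewrite !cardsU1 cards1 !inE ij ik jk.
- have sg_pm e : (sg e == 0) || (sg e == 1) || (sg e == -1) by case: e.
  by apply/forallP => t; rewrite coord; do 3!(case: ifP => _; rewrite ?sg_pm //).
Qed.

Definition odd_assignment n (x : assignment n) := forall v, inV v -> x (negv v) = ~~ x v.

Lemma odd_assignment_mkv3 n (x : assignment n) (i j k : 'I_n) a b c :
  odd_assignment x -> i != j -> i != k -> j != k ->
  x (mkv3 i j k (- sg a) (- sg b) (- sg c)) = ~~ x (mkv3 i j k (sg a) (sg b) (sg c)).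
Proof. by move=> hx ij ik jk; rewrite mkv3_opp hx // inV_mkv3. Qed.

Lemma injectiveb_inord_neq (T : eqType) k (f : 'I_k.+1 -> T) a b : injectiveb f ->
  (a <= k)%N -> (b <= k)%N -> a != b -> f (inord a) != f (inord b).
Proof. by move=> /injectiveP fi ak bk ab; rewrite (inj_eq fi) -val_eqE /= !inordK. Qed.

Section Correlations.
Variables (R : numFieldType) (n : nat) (x : assignment n).
Hypothesis x_odd : odd_assignment x.

Definition lit k (p : params n k.+1) (a b c : nat) : bool :=
  x (mkv3 (p.1 (inord a)) (p.1 (inord b)) (p.1 (inord c))
          (sg (p.2 (inord a))) (sg (p.2 (inord b))) (sg (p.2 (inord c)))).

(* The literals of [clause3] have their middle coefficient negated. *)
Definition litN k (p : params n k.+1) (a b c : nat) : bool :=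
  x (mkv3 (p.1 (inord a)) (p.1 (inord b)) (p.1 (inord c))
          (sg (p.2 (inord a))) (- sg (p.2 (inord b))) (sg (p.2 (inord c)))).

Definition pair_spin (q : params n 5) : R := spin (lit q 0 1 2) * spin (lit q 0 3 4).

Definition pair_corr : R := \sum_(q : params n 5 | injectiveb q.1) pair_spin q.

Definition quad_corr : R :=
  \sum_(q : params n 9 | injectiveb q.1)
     spin (lit q 0 1 2) * spin (lit q 0 3 4) * spin (lit q 0 5 6) * spin (lit q 0 7 8).

Lemma sum_injective_params1 k :
  \sum_(p : params n k | injectiveb p.1) 1 = (n ^_ k * 2 ^ k)%:R :> R.
Proof. by rewrite sumr_const card_injective_params. Qed.

Lemma sum_litN_pair :
  \sum_(q : params n 5 | injectiveb q.1) spin (litN q 0 1 3) * spin (litN q 1 2 4) =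
  - pair_corr.
Proof.
(* Move the shared coordinate first and flip signs so that it is positive in both vectors;
   by oddness the first literal then becomes the negation of a [pair_spin] literal. *)
rewrite (sum_injective_params_relabel_seq [:: 1; 0; 3; 2; 4]%N [:: 1; 0; 3; 2; 4]%N
  [:: true; false; true; true]) //.
rewrite -sumrN; apply: eq_bigr => q q_inj; rewrite /pair_spin -mulNr -spinN.
rewrite /litN !relabel_seq_index // !relabel_seq_sign //= !addbT !addbF !sgN opprK mkv3C.
by rewrite odd_assignment_mkv3 ?injectiveb_inord_neq.
Qed.

Lemma sum_sat_clause3 :
  \sum_(p : params n 6 | injectiveb p.1) (satisfied x (clause3 p))%:R =
  (3 * (n ^_ 6 * 2 ^ 6)%:R + 3 * ((n - 5) ^_ 1 * 2 ^ 1)%:R * pair_corr) / 4.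
Proof.
have sat3 p : satisfied x (clause3 p) = nae [:: litN p 0 1 3; litN p 1 2 4; litN p 2 0 5].
  by [].
under eq_bigr do rewrite sat3 nae3_spin.
rewrite sumrB -mulr_suml !big_split /= sum_injective_params1.
set T := \sum_(p : params n 6 | injectiveb p.1) spin (litN p 0 1 3) * spin (litN p 1 2 4).
have -> : \sum_(p : params n 6 | injectiveb p.1)
    spin (litN p 1 2 4) * spin (litN p 2 0 5) = T.
  rewrite /T [RHS](sum_injective_params_relabel_seq
    [:: 1; 2; 0; 4; 5; 3]%N [:: 2; 0; 1; 5; 3; 4]%N [::]) //.
  by apply: eq_bigr => p _; rewrite /litN !relabel_seq_index // !relabel_seq_sign //= !addbF.
have -> : \sum_(p : params n 6 | injectiveb p.1)
    spin (litN p 2 0 5) * spin (litN p 0 1 3) = T.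
  rewrite /T [RHS](sum_injective_params_relabel_seq
    [:: 2; 0; 1; 5; 3; 4]%N [:: 1; 2; 0; 4; 5; 3]%N [::]) //.
  by apply: eq_bigr => p _; rewrite /litN !relabel_seq_index // !relabel_seq_sign //= !addbF.
have -> : T = - (((n - 5) ^_ 1 * 2 ^ 1)%:R * pair_corr).
  rewrite -mulrN -sum_litN_pair -(sum_injective_params_lsub 1).
  by apply: eq_bigr => p _; rewrite /litN /params_lsub /= !ffun_lsub_inord.
by field.
Qed.

Lemma pair_corr12 :
  \sum_(p : params n 12 | injectiveb p.1) spin (lit p 0 1 2) * spin (lit p 0 3 4) =
  ((n - 5) ^_ 7 * 2 ^ 7)%:R * pair_corr.
Proof.
rewrite -(sum_injective_params_lsub 7); apply: eq_bigr => p _.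
by rewrite /pair_spin /lit /params_lsub /= !ffun_lsub_inord.
Qed.

Lemma quad_corr12 :
  \sum_(p : params n 12 | injectiveb p.1)
     spin (lit p 0 1 2) * spin (lit p 0 3 4) * spin (lit p 0 5 6) * spin (lit p 0 7 8) =
  ((n - 9) ^_ 3 * 2 ^ 3)%:R * quad_corr.
Proof.
rewrite -(sum_injective_params_lsub 3); apply: eq_bigr => p _.
by rewrite /lit /params_lsub /= !ffun_lsub_inord.
Qed.

Lemma sum_lit_pairs12 (s s' : seq nat) :
  nth 0%N s 0 = 0%N ->
  all (fun a => (nth 0%N s a <= 11)%N && (nth 0%N s' (nth 0%N s a) == a)) (iota 0 12) ->
  \sum_(p : params n 12 | injectiveb p.1)
     spin (lit p 0 (nth 0%N s 1) (nth 0%N s 2)) *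
     spin (lit p 0 (nth 0%N s 3) (nth 0%N s 4)) =
  ((n - 5) ^_ 7 * 2 ^ 7)%:R * pair_corr.
Proof.
move=> s0 ss'; rewrite -pair_corr12 [RHS](sum_injective_params_relabel_seq s s' [::] ss').
by apply: eq_bigr => p _; rewrite /lit !relabel_seq_index // !relabel_seq_sign // s0 !addbF.
Qed.

Definition star_lits (p : params n 12) : seq bool :=
  [:: lit p 0 1 2; lit p 0 3 4; lit p 0 5 6; lit p 0 7 8].

Lemma sum_constant_star_lits :
  \sum_(p : params n 12 | injectiveb p.1) (constant (star_lits p))%:R =
  ((n ^_ 12 * 2 ^ 12)%:R + 6 * (((n - 5) ^_ 7 * 2 ^ 7)%:R * pair_corr)
     + ((n - 9) ^_ 3 * 2 ^ 3)%:R * quad_corr) / 8.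
Proof.
under eq_bigr do rewrite constant4_spin.
rewrite -mulr_suml !big_split /= sum_injective_params1 quad_corr12 pair_corr12.
rewrite (@sum_lit_pairs12 [:: 0; 1; 2; 5; 6; 3; 4; 7; 8; 9; 10; 11]%N
                          [:: 0; 1; 2; 5; 6; 3; 4; 7; 8; 9; 10; 11]%N) //.
rewrite (@sum_lit_pairs12 [:: 0; 1; 2; 7; 8; 5; 6; 3; 4; 9; 10; 11]%N
                          [:: 0; 1; 2; 7; 8; 5; 6; 3; 4; 9; 10; 11]%N) //.
rewrite (@sum_lit_pairs12 [:: 0; 3; 4; 5; 6; 1; 2; 7; 8; 9; 10; 11]%N
                          [:: 0; 5; 6; 1; 2; 3; 4; 7; 8; 9; 10; 11]%N) //.
rewrite (@sum_lit_pairs12 [:: 0; 3; 4; 7; 8; 5; 6; 1; 2; 9; 10; 11]%N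
                          [:: 0; 7; 8; 1; 2; 5; 6; 3; 4; 9; 10; 11]%N) //.
rewrite (@sum_lit_pairs12 [:: 0; 5; 6; 7; 8; 1; 2; 3; 4; 9; 10; 11]%N
                          [:: 0; 5; 6; 7; 8; 1; 2; 3; 4; 9; 10; 11]%N) //.
by field.
Qed.

Lemma sum_constant_clause5 :
  \sum_(p : params n 12 | injectiveb p.1)
     (constant (rcons (star_lits p) (lit p 9 10 11)))%:R =
  (\sum_(p : params n 12 | injectiveb p.1) (constant (star_lits p))%:R) / 2 :> R.
Proof.
set A := \sum_(p : params n 12 | injectiveb p.1) _.
(* Flipping the three signs of the last vector negates its literal, since x is odd. *)
have flip_last : A = \sum_(p : params n 12 | injectiveb p.1)
    (constant (rcons (star_lits p) (~~ lit p 9 10 11)))%:R.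
  rewrite /A (sum_injective_params_relabel_seq (iota 0 12) (iota 0 12)
    [:: false; false; false; false; false; false; false; false; false; true; true; true]) //.
  apply: eq_bigr => p p_inj.
  rewrite /star_lits /lit !relabel_seq_index // !relabel_seq_sign //= !addbF !addbT !sgN.
  by rewrite odd_assignment_mkv3 ?injectiveb_inord_neq.
suff twice : A + A = \sum_(p : params n 12 | injectiveb p.1) (constant (star_lits p))%:R.
  by rewrite -twice; field.
rewrite [X in _ + X]flip_last /A -big_split; apply: eq_bigr => p _.
by rewrite -(@constant_rcons_flip (star_lits p) (lit p 9 10 11)) // natrD.
Qed.

Lemma sum_sat_clause5 :
  \sum_(p : params n 12 | injectiveb p.1) (satisfied x (clause5 p))%:R =
  (n ^_ 12 * 2 ^ 12)%:R - ((n ^_ 12 * 2 ^ 12)%:R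
     + 6 * (((n - 5) ^_ 7 * 2 ^ 7)%:R * pair_corr)
     + ((n - 9) ^_ 3 * 2 ^ 3)%:R * quad_corr) / 16.
Proof.
have sat5 p : satisfied x (clause5 p) = ~~ constant (rcons (star_lits p) (lit p 9 10 11)).
  by [].
have natr_negb b : (~~ b)%:R = 1 - b%:R :> R by case: b; rewrite ?subr0 ?subrr.
under eq_bigr do rewrite sat5 natr_negb.
rewrite sumrB sum_injective_params1 sum_constant_clause5 sum_constant_star_lits.
by field.
Qed.

End Correlations.

(** * Quadruple correlations dominate squared pair correlations *)
Lemma cauchy_schwarz_sumr (R : realFieldType) (I : finType) (F : I -> R) :
  (\sum_i F i) ^+ 2 <= #|I|%:R * \sum_i F i ^+ 2.
Proof.
have : 0 <= \sum_i \sum_j (F i - F j) ^+ 2.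
  by apply: sumr_ge0 => i _; apply: sumr_ge0 => j _; exact: sqr_ge0.
have -> : \sum_i \sum_j (F i - F j) ^+ 2 =
    \sum_(i : I) \sum_(j : I) F i ^+ 2 + \sum_(i : I) \sum_(j : I) F j ^+ 2
    - 2 * \sum_i \sum_j F i * F j.
  rewrite mulr_sumr -big_split -sumrB /=; apply: eq_bigr => i _.
  rewrite mulr_sumr -big_split -sumrB /=; apply: eq_bigr => j _.
  by rewrite sqrrB; ring.
have -> : \sum_i \sum_j F i * F j = (\sum_i F i) ^+ 2.
  by rewrite expr2 mulr_suml; apply: eq_bigr => i _; rewrite mulr_sumr.
have -> : \sum_(i : I) \sum_(j : I) F i ^+ 2 = #|I|%:R * \sum_i F i ^+ 2.
  by rewrite mulr_sumr; apply: eq_bigr => i _; rewrite sumr_const mulr_natl.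
have -> : \sum_(i : I) \sum_(j : I) F j ^+ 2 = #|I|%:R * \sum_i F i ^+ 2.
  by rewrite sumr_const mulr_natl.
lra.
Qed.

Definition collisions n k (f g : {ffun 'I_k -> 'I_n}) : nat := \sum_a \sum_b (f a == g b).

Lemma collisions_gt0 n k (f g : {ffun 'I_k -> 'I_n}) :
  (0 < collisions f g)%N = ~~ [forall a, forall b, f a != g b].
Proof.
rewrite lt0n sum_nat_eq0; congr (~~ _); apply: eq_forallb => a.
by rewrite sum_nat_eq0; apply: eq_forallb => b; rewrite eqb0.
Qed.

Lemma card_ffun_eq_at n k (b : 'I_k.+1) (v : 'I_n) :
  #|[pred g : {ffun 'I_k.+1 -> 'I_n} | g b == v]| = (n ^ k)%N.
Proof.
pose F := fun i : 'I_k.+1 => if i == b then pred1 v else predT.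
rewrite (eq_card (B := family F)); last first.
  move=> g; rewrite !inE; apply/eqP/familyP => [e i | h].
    by rewrite /F; case: eqP => [->|]; rewrite inE ?e.
  by have := h b; rewrite /F eqxx inE => /eqP.
rewrite card_family foldrE big_map big_enum /= (bigD1 b) //= /F eqxx card1 mul1n.
rewrite (eq_bigr (fun _ => n)); last by move=> i /negbTE ->; rewrite -[RHS](card_ord n).
by rewrite (prod_nat_const (predC1 b)) cardC1 card_ord.
Qed.

Lemma sum_collisions n k (f : {ffun 'I_k.+1 -> 'I_n}) :
  (\sum_(s : params n k.+1) collisions f s.1 = k.+1 * k.+1 * (n ^ k * 2 ^ k.+1))%N.
Proof.
have inner a b : (\sum_(s : params n k.+1) (f a == s.1 b) = n ^ k * 2 ^ k.+1)%N.
  rewrite -big_mkcond sum1_card (eq_card (B := [pred s : params n k.+1 | s.1 b == f a])).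
    by rewrite (card_params_index (fun g => g b == f a)) card_ffun_eq_at.
  by move=> s; rewrite !inE eq_sym.
rewrite exchange_big /= (eq_bigr (fun _ => k.+1 * (n ^ k * 2 ^ k.+1))%N).
  by rewrite sum_nat_const card_ord mulnA.
move=> a _; rewrite exchange_big /= (eq_bigr (fun _ => n ^ k * 2 ^ k.+1)%N).
  by rewrite sum_nat_const card_ord.
by move=> b _; apply: inner.
Qed.

Lemma normr_spin (R : numDomainType) b : `|spin b : R| = 1.
Proof. by case: b; rewrite /spin ?normrN normr1. Qed.

Lemma injectiveb_params_cat2 n (c : params n 1) (s1 s2 : params n 4) :
  injectiveb (params_cat (params_cat c s1) s2).1 =
  [&& injectiveb (params_cat c s1).1, injectiveb (params_cat c s2).1
    & [forall a, forall b, s1.1 a != s2.1 b]].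
Proof.
rewrite /params_cat /= !injectiveb_ffun_cat forall_ord_add.
have -> : [forall i, forall j, ffun_cat c.1 s1.1 (lshift 4 i) != s2.1 j] =
          [forall i, forall j, c.1 i != s2.1 j].
  by apply: eq_forallb => i; rewrite ffun_cat_lshift.
have -> : [forall i, forall j, ffun_cat c.1 s1.1 (rshift 1 i) != s2.1 j] =
          [forall i, forall j, s1.1 i != s2.1 j].
  by apply: eq_forallb => i; rewrite ffun_cat_rshift.
by case: (injectiveb c.1); case: (injectiveb s1.1); case: (injectiveb s2.1);
  case: [forall i, _]; case: [forall i, _]; case: [forall i, _].
Qed.

Section QuadCorrLowerBound.
Variables (R : realFieldType) (n : nat) (x : assignment n).

Definition leg (c : params n 1) (s : params n 4) : R :=
  (injectiveb (params_cat c s).1)%:R * pair_spin R x (params_cat c s).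

Lemma pair_corr_legs : pair_corr R x = \sum_c \sum_s leg c s.
Proof.
rewrite /pair_corr big_mkcond (@sum_params_cat _ n 1 4).
apply: eq_bigr => c _; apply: eq_bigr => s _.
by rewrite /leg; case: injectiveb; rewrite ?mul1r ?mul0r.
Qed.

Lemma quad_corr_legs :
  quad_corr R x = \sum_(c : params n 1) \sum_(s1 : params n 4) \sum_(s2 : params n 4)
  (injectiveb (params_cat (params_cat c s1) s2).1)%:R *
  (pair_spin R x (params_cat c s1) * pair_spin R x (params_cat c s2)).
Proof.
rewrite /quad_corr big_mkcond (@sum_params_cat _ n 5 4) (@sum_params_cat _ n 1 4).
apply: eq_bigr => c _; apply: eq_bigr => s1 _; apply: eq_bigr => s2 _.
case: injectiveb; rewrite ?mul0r // mul1r.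
rewrite /pair_spin /lit /params_cat /= !(ffun_cat_inord (m := 4) (l := 3)) //=.
by rewrite !(ffun_cat_inord (m := 0) (l := 3)) //= !mulrA.
Qed.

Lemma legs_mul_le (c : params n 1) (s1 s2 : params n 4) :
  leg c s1 * leg c s2 - (collisions s1.1 s2.1)%:R <=
  (injectiveb (params_cat (params_cat c s1) s2).1)%:R *
  (pair_spin R x (params_cat c s1) * pair_spin R x (params_cat c s2)).
Proof.
have spins_le1 : pair_spin R x (params_cat c s1) * pair_spin R x (params_cat c s2) <= 1.
  by apply: le_trans (ler_norm _) _; rewrite /pair_spin !normrM !normr_spin !mulr1.
rewrite /leg injectiveb_params_cat2.
case: (injectiveb (params_cat c s1).1); last by rewrite !mul0r sub0r oppr_le0 ler0n.
case: (injectiveb (params_cat c s2).1); last by rewrite !mul0r mulr0 sub0r oppr_le0 ler0n.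
rewrite /= !mul1r; case: (boolP [forall a, _]) => [_ | clash].
  by rewrite mul1r gerBl ler0n.
have : (1 <= collisions s1.1 s2.1)%N by rewrite collisions_gt0.
rewrite -(ler_nat R) mul0r; lra.
Qed.

Lemma sum_sqr_legs_le :
  \sum_c (\sum_s leg c s) ^+ 2 - 8192 * n%:R ^+ 8 <= quad_corr R x.
Proof.
have -> : 8192 * n%:R ^+ 8 =
    \sum_(c : params n 1) \sum_(s1 : params n 4) \sum_(s2 : params n 4)
      (collisions s1.1 s2.1)%:R :> R.
  under eq_bigr do under eq_bigr do rewrite -natr_sum sum_collisions.
  rewrite !sumr_const !card_params -!mulrnA -natrX -natrM; congr _%:R.
  by rewrite !expnS expn0; lia.
rewrite quad_corr_legs -sumrB; apply: ler_sum => c _.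
rewrite expr2 mulr_suml -sumrB; apply: ler_sum => s1 _.
rewrite mulr_sumr -sumrB; apply: ler_sum => s2 _.
exact: legs_mul_le.
Qed.

Lemma quad_corr_ge : (0 < n)%N ->
  pair_corr R x ^+ 2 / (2 * n%:R) - 8192 * n%:R ^+ 8 <= quad_corr R x.
Proof.
move=> n_gt0; apply: le_trans sum_sqr_legs_le; rewrite lerD2r.
rewrite ler_pdivrMr ?mulr_gt0 ?ltr0n // pair_corr_legs mulrC.
apply: le_trans (cauchy_schwarz_sumr _) _.
by rewrite card_params !expn1 natrM (mulrC 2).
Qed.

End QuadCorrLowerBound.

Lemma ffactnD n m l : (n ^_ (m + l) = n ^_ m * (n - m) ^_ l)%N.
Proof.
elim: l => [|l IH]; first by rewrite addn0 ffactn0 muln1.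
by rewrite addnS !ffactnSr IH -mulnA subnDA.
Qed.

Lemma leq_ffact m n k : (m <= n)%N -> (m ^_ k <= n ^_ k)%N.
Proof.
elim: k m n => [|k IH] m n mn; first by rewrite !ffactn0.
by rewrite !ffactnS leq_mul // IH // -!subn1 leq_sub2r.
Qed.

Lemma ffact5_sqr_ge n : (n * n ^_ 9 <= n ^_ 5 * n ^_ 5)%N.
Proof.
rewrite -[9%N]/(5 + 4)%N ffactnD mulnCA leq_mul // (ffactnS n 4) leq_mul //.
by rewrite leq_ffact // -subn1 leq_sub2l.
Qed.

Lemma ffact9_ge (R : realFieldType) n : (128 <= n)%N -> n%:R ^+ 9 / 2 <= (n ^_ 9)%:R :> R.
Proof.
move=> n_ge; rewrite ffact_prod natr_prod.
have factor_ge (i : 'I_9) : 15 / 16 * n%:R <= (n - i)%:R :> R.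
  have i_le : (i <= 8)%N by rewrite -ltnS.
  rewrite natrB; last by lia.
  have : (i%:R : R) <= 8 by rewrite ler_nat.
  have : (128 : R) <= n%:R by rewrite ler_nat.
  lra.
have prod_ge : \prod_(i < 9) (15 / 16 * n%:R) <= \prod_(i < 9) (n - i)%:R :> R.
  apply: ler_prod => i _; rewrite factor_ge andbT.
  by apply: mulr_ge0; [lra | exact: ler0n].
apply: le_trans prod_ge.
rewrite prodr_const card_ord exprMn.
have : (1 / 2 : R) <= (15 / 16) ^+ 9 by rewrite !exprS expr0; lra.
have : 0 <= (n%:R : R) ^+ 9 by rewrite exprn_ge0.
nra.
Qed.

Lemma natr_ffact_ratio (R : numFieldType) n k j (S : R) : (k + j <= n)%N ->
  ((n - k) ^_ j * 2 ^ j)%:R * S / (n ^_ (k + j) * 2 ^ (k + j))%:R =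
  S / (n ^_ k * 2 ^ k)%:R.
Proof.
move=> kjn; rewrite ffactnD expnD mulnACA natrM; field.
by rewrite !pnatr_eq0 -!lt0n !expn_gt0 !ffact_gt0 leq_subRL ?(leq_trans (leq_addr j k)) // addnC.
Qed.

Section Averages.
Variables (R : realFieldType) (n : nat) (x : assignment n).

Definition pair_avg : R := pair_corr R x / (n ^_ 5 * 2 ^ 5)%:R.
Definition quad_avg : R := quad_corr R x / (n ^_ 9 * 2 ^ 9)%:R.

Lemma prob_sat_clause3 : (6 <= n)%N -> odd_assignment x ->
  (\sum_(p : params n 6 | injectiveb p.1) (satisfied x (clause3 p))%:R) /
    (n ^_ 6 * 2 ^ 6)%:R = 3 * (1 + pair_avg) / 4.
Proof.
move=> n_ge6 x_odd; rewrite sum_sat_clause3 // /pair_avg.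
rewrite -(natr_ffact_ratio _ (k := 5) (j := 1)) //.
by field; rewrite pnatr_eq0 -lt0n ffact_gt0.
Qed.

Lemma prob_sat_clause5 : (12 <= n)%N -> odd_assignment x ->
  (\sum_(p : params n 12 | injectiveb p.1) (satisfied x (clause5 p))%:R) /
    (n ^_ 12 * 2 ^ 12)%:R = (15 - 6 * pair_avg - quad_avg) / 16.
Proof.
move=> n_ge12 x_odd; rewrite sum_sat_clause5 // /pair_avg /quad_avg.
rewrite -(natr_ffact_ratio _ (k := 5) (j := 7)) // -(natr_ffact_ratio _ (k := 9) (j := 3)) //.
by field; rewrite pnatr_eq0 -lt0n ffact_gt0.
Qed.

Lemma quad_avg_ge : (128 <= n)%N -> pair_avg ^+ 2 - 32 / n%:R <= quad_avg.
Proof.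
move=> n_ge; have n_gt0 : (0 < n)%N by apply: leq_trans n_ge.
have n_pos : 0 < n%:R :> R by rewrite ltr0n.
have N9_pos : 0 < (n ^_ 9 * 2 ^ 9)%:R :> R by rewrite ltr0n muln_gt0 ffact_gt0 expn_gt0; lia.
have N5_pos : 0 < (n ^_ 5 * 2 ^ 5)%:R :> R by rewrite ltr0n muln_gt0 ffact_gt0 expn_gt0; lia.
have denom_le : 2 * n%:R * (n ^_ 9 * 2 ^ 9)%:R <= (n ^_ 5 * 2 ^ 5)%:R ^+ 2 :> R.
  move: (n ^_ 9) (n ^_ 5) (ffact5_sqr_ge n) => f9 f5.
  by rewrite -(ler_nat R) !natrM; nra.
have error_le : 8192 * n%:R ^+ 8 / (n ^_ 9 * 2 ^ 9)%:R <= 32 / n%:R :> R.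
  rewrite ler_pdivrMr // mulrAC ler_pdivlMr // -mulrA -exprSr.
  by have := ffact9_ge R n_ge; rewrite natrM natrX; lra.
have N9inv_ge0 : 0 <= (n ^_ 9 * 2 ^ 9)%:R^-1 :> R by rewrite invr_ge0; exact: ltW N9_pos.
have avg_sqr_le : pair_avg ^+ 2 <= pair_corr R x ^+ 2 / (2 * n%:R) / (n ^_ 9 * 2 ^ 9)%:R.
  by rewrite expr_div_n -mulrA -invfM ler_wpM2l ?sqr_ge0 // lef_pV2 ?posrE ?mulr_gt0.
rewrite /quad_avg; apply: le_trans _ (ler_wpM2r N9inv_ge0 (quad_corr_ge R x n_gt0)).
by rewrite mulrBl; apply: lerB.
Qed.

End Averages.

Lemma sumr_pred_const (R : pzSemiRingType) (I : finType) (A : {pred I}) (P : pred I)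
    (c : R) :
  \sum_(i in A | P i) c = c * \sum_(i in A) (P i)%:R.
Proof.
rewrite mulr_sumr big_mkcondr; apply: eq_bigr => i _.
by case: (P i); rewrite ?mulr1 ?mulr0.
Qed.

Lemma satWeight_avg (R : realType) n (x : assignment n) :
  (12 <= n)%N -> odd_assignment x ->
  satWeight R x = w3 * (3 * (1 + pair_avg R x) / 4) +
                  w5 * ((15 - 6 * pair_avg R x - quad_avg R x) / 16).
Proof.
move=> n_ge12 x_odd.
have sum_injective k (F : params n k -> R) :
    \sum_(p in [set p : params n k | injectiveb p.1]) F p =
    \sum_(p : params n k | injectiveb p.1) F p.
  by apply: eq_bigl => p; rewrite inE.
rewrite /satWeight /C3 /C5 !sumr_pred_const !sum_injective !cardsE !card_injective_params.
rewrite -prob_sat_clause3 ?(leq_trans _ n_ge12) // -prob_sat_clause5 //.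
by ring.
Qed.

Lemma weight_profile_le (R : realType) (a : R) :
  w3 * (3 * (1 + a) / 4) + w5 * ((15 - 6 * a - a ^+ 2) / 16) <= 3 * (Num.sqrt 21 - 4) / 2.
Proof.
rewrite /w3 /w5; set r := Num.sqrt 21.
have r_sqr : r ^+ 2 = 21 by rewrite sqr_sqrtr.
have r_gt0 : 0 < r by rewrite sqrtr_gt0.
have gap : 3 * (r - 4) / 2 -
    ((1 - 3 / r) * (3 * (1 + a) / 4) + 3 / r * ((15 - 6 * a - a ^+ 2) / 16)) =
    (3 * (a + 9 - 2 * r) ^+ 2 + 12 * (r ^+ 2 - 21)) / (16 * r).
  by field; rewrite gt_eqF.
rewrite -subr_ge0 gap r_sqr subrr mulr0 addr0.
by rewrite divr_ge0 ?[0 <= 3 * _]mulr_ge0 ?sqr_ge0 ?mulr_ge0 ?(ltW r_gt0).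
Qed.

Lemma w5_ge0 (R : realType) : 0 <= w5 :> R.
Proof. by rewrite divr_ge0 ?sqrtr_ge0. Qed.

Lemma w5_le1 (R : realType) : w5 <= 1 :> R.
Proof.
rewrite ler_pdivrMr ?sqrtr_gt0 // mul1r -(ler_pXn2r (_ : 0 < 2)%N) ?nnegrE ?sqrtr_ge0 //.
by rewrite sqr_sqrtr //; lra.
Qed.

Theorem mainTheorem7 (R : realType) :
  exists C : R, 0 < C /\
  exists n0 : nat, forall n : nat, (n0 <= n)%N ->
    forall x : assignment n,
      (forall v : vec n, inV v -> x (negv v) = ~~ x v) ->
      satWeight R x <= 3 * (Num.sqrt 21 - 4) / 2 + C / n%:R.
Proof.
exists 2; split; first lra.
exists 128%N => n n_ge x x_odd.
have n_pos : 0 < n%:R :> R by rewrite ltr0n (leq_trans _ n_ge).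
rewrite satWeight_avg ?(leq_trans _ n_ge) //.
have := quad_avg_ge R x n_ge; have := weight_profile_le (pair_avg R x).
set a := pair_avg R x; set A := quad_avg R x => profile_le A_ge.
have step : w5 * ((15 - 6 * a - A) / 16) <= w5 * ((15 - 6 * a - a ^+ 2) / 16) + 2 / n%:R.
  have err_ge0 : 0 <= 2 / n%:R :> R by apply: divr_ge0 => //; exact: ltW.
  apply: le_trans (ler_wpM2l (w5_ge0 R) (_ : _ <= (15 - 6 * a - a ^+ 2) / 16 + 2 / n%:R)) _.
    lra.
  by rewrite mulrDr lerD2l ler_piMl ?w5_le1.
lra.
Qed.
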